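(* Suppose there exists a constant $C$ such that for all positive integers $k$ we have $\mathrm{LCS}_2(2k,\mathcal P_k)\leq Ck^{1/3}$. Then for all $k\geq 2$, $\mathrm{LT}(k,n)\leq 6Ck^{-2/3}n+o(n)$ as $n\to\infty$.
   Context: $\mathcal{P}_k$ is the set of permutations on $k$ letters (words over $[k]=\{1,\dots,k\}$ in which each letter occurs exactly once). $\mathrm{LCS}(w,w')$ is the length of a longest common subsequence of words $w,w'$; $\mathrm{LCS}_2(t,\mathcal P_k)$ is the minimum, over sets of $t$ distinct permutations in $\mathcal P_k$, of the maximum $\mathrm{LCS}$ of two distinct members. Two subsequences of a word $w$ are twins if they are equal as words and use disjoint sets of positions of $w$; $\mathrm{LT}(w)$ is the maximum length of twins in $w$ and $\mathrm{LT}(k,n)=\min_{w\in[k]^n}\mathrm{LT}(w)$. *)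

From HB Require Import structures.
From mathcomp Require Import all_boot all_order all_algebra all_fingroup.
From mathcomp Require Import all_classical all_reals all_analysis.
Set Implicit Arguments. Unset Strict Implicit. Unset Printing Implicit Defensive.
Import Order.TTheory GRing.Theory Num.Theory.

(* Words over the alphabet [k] are sequences of letters in 'I_k
   (letters 0..k-1 instead of 1..k; irrelevant). *)

Definition LCS (T : eqType) (w w' : seq T) : nat :=
  \max_(m : (size w).-tuple bool | subseq (mask m w) w') size (mask m w).

Definition perm_word (k : nat) (p : 'S_k) : seq 'I_k :=
  [seq p i | i <- enum 'I_k].

Definition maxLCS (k : nat) (S : {set 'S_k}) : nat :=
  \max_(p in S) \max_(q in S | p != q) LCS (perm_word p) (perm_word q).

(* LCS_2(t, P_k): minimum over sets of t distinct permutations of maxLCS.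
   (When no such set exists, i.e. t > k!, the default value k is returned;
   the theorem only uses LCS2 when t <= k!.) *)
Definition LCS2 (t k : nat) : nat :=
  \big[minn/k]_(S : {set 'S_k} | #|S| == t) maxLCS S.

(* Twins in w : two equal subsequences using disjoint position sets. *)
Definition LTw (T : eqType) (w : seq T) : nat :=
  \max_(m1 : (size w).-tuple bool | [exists m2 : (size w).-tuple bool,
          [forall i : 'I_(size w), ~~ (tnth m1 i && tnth m2 i)]
          && (mask m1 w == mask m2 w)]) size (mask m1 w).

Definition LT (k n : nat) : nat :=
  \big[minn/n]_(w : n.-tuple 'I_k) LTw (tval w).

From HB Require Import structures.
From mathcomp Require Import all_boot all_order all_algebra all_fingroup.
From mathcomp Require Import all_classical all_reals all_analysis.
From mathcomp Require Import ring lra zify.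
Import Order.TTheory GRing.Theory Num.Theory.
Set Implicit Arguments. Unset Strict Implicit. Unset Printing Implicit Defensive.

(* Take 2k permutations of [k] with pairwise LCS at most L = LCS_2(2k, P_k) and
   replace each letter a of a word x over [2k] by the block formed by the a-th
   permutation.  In a pair of twins of the resulting word, the matched pairs of
   positions lying in blocks of different letters are grouped by the sum of
   their two block indices; as both twins move to the right, each group stays
   inside one pair of blocks and is a common subsequence of two distinct
   permutations, so it has at most L elements, and there are 2|x| groups.  The
   pairs lying in blocks of the same letter sit at the same offset inside their
   blocks, and for each of the k offsets they form twins of x.  Taking for x a
   word of length n/k + 1 realising LT(2k, n/k + 1) gives
     LT(k, n) <= 2 (n/k + 1) L + k LT(2k, n/k + 1).
   With L <= C k^(1/3) = k C k^(-2/3), a slope c for C (2k)^(-2/3) at level 2k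
   yields the slope 2 + 2^(-2/3) c at level k, whose fixed point is
   2 / (1 - 2^(-2/3)) < 5.5.  For k >= 50 the slope 5.9 propagates without any
   additive error (by induction on n); smaller k reach this regime after
   finitely many doublings, each contributing a constant.  The recursion needs
   2k <= k!, so k = 2 is treated apart, with LT(2, n) <= n. *)

Section TwinMatchings.
Variables (X : eqType) (x0 : X).

(* Twins presented by their matched positions: (i, j) in T pairs position i of
   the first twin with position j of the second. *)
Definition twin_matching (w : seq X) (T : seq (nat * nat)) : bool :=
  [&& sorted ltn (unzip1 T), sorted ltn (unzip2 T),
      all (fun u => [&& u.1 < size w, u.2 < size w & nth x0 w u.1 == nth x0 w u.2]) T
    & all (fun u => u.1 \notin unzip2 T) T].

Lemma mask_nth_iota (m : bitseq) (s : seq X) :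
  mask m s = map (nth x0 s) (mask m (iota 0 (size s))).
Proof. by rewrite map_mask -/(mkseq (nth x0 s) (size s)) mkseq_nth. Qed.

Lemma nth_mask_iota (m : bitseq) n i : i \in mask m (iota 0 n) -> nth false m i.
Proof.
rewrite in_mask ?iota_uniq // mem_iota add0n => /andP[/= lt_in].
by rewrite -[X in index X _](nth_iota 0 0 lt_in) index_uniq ?size_iota ?iota_uniq.
Qed.

Lemma mask_mem_iota (s : seq X) (I : seq nat) :
  sorted ltn I -> all (fun i => i < size s) I ->
  mask [seq i \in I | i <- iota 0 (size s)] s = map (nth x0 s) I.
Proof.
move=> sI aI; rewrite mask_nth_iota -filter_mask; congr map.
apply: (irr_sorted_eq ltn_trans ltnn) => //.
  by apply: sorted_filter; [exact: ltn_trans | exact: iota_ltn_sorted].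
move=> i; rewrite mem_filter mem_iota add0n /=.
by case iI: (i \in I) => //=; move/allP: aI => /(_ _ iI).
Qed.

Lemma subseq_map_nth (s : seq X) (I : seq nat) :
  sorted ltn I -> all (fun i => i < size s) I -> subseq (map (nth x0 s) I) s.
Proof. by move=> sI aI; rewrite -mask_mem_iota // mask_subseq. Qed.

Lemma matching_size_le_LTw (w : seq X) T : twin_matching w T -> size T <= LTw w.
Proof.
case/and4P=> s1 s2 aT dT.
pose ind (I : seq nat) := [seq i \in I | i <- iota 0 (size w)].
have size_ind I : size (ind I) == size w by rewrite size_map size_iota.
have mask_ind (p : nat * nat -> nat) : all (fun i => i < size w) (map p T) ->
    sorted ltn (map p T) -> mask (ind (map p T)) w = map (nth x0 w) (map p T).
  by move=> ap sp; rewrite mask_mem_iota.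
have a1 : all (fun i => i < size w) (unzip1 T).
  by rewrite all_map; apply: sub_all aT => u /and3P[].
have a2 : all (fun i => i < size w) (unzip2 T).
  by rewrite all_map; apply: sub_all aT => u /and3P[].
pose m1 := Tuple (size_ind (unzip1 T)); pose m2 := Tuple (size_ind (unzip2 T)).
have -> : size T = size (mask m1 w) by rewrite mask_ind // !size_map.
apply: (leq_bigmax_cond (F := fun m : (size w).-tuple bool => size (mask m w))).
apply/existsP; exists m2; apply/andP; split.
  apply/forallP => i; rewrite !(tnth_nth false) /= !(nth_map 0) ?size_iota //.
  rewrite nth_iota // add0n; apply/negP => /andP[/mapP[u uT ->] h2].
  by move/allP: dT => /(_ u uT); rewrite h2.
rewrite !mask_ind // -!map_comp; apply/eqP/eq_in_map => u uT /=.
by move/allP: aT => /(_ u uT) /and3P[_ _ /eqP].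
Qed.

Lemma LTw_le_matchings (w : seq X) B :
  (forall T, twin_matching w T -> size T <= B) -> LTw w <= B.
Proof.
move=> H; apply/bigmax_leqP => m1 /existsP[m2 /andP[/forallP dis /eqP me]].
set n := size w.
pose P := mask m1 (iota 0 n); pose Q := mask m2 (iota 0 n).
have eP : mask m1 w = map (nth x0 w) P by rewrite mask_nth_iota.
have eQ : mask m2 w = map (nth x0 w) Q by rewrite mask_nth_iota.
have sPQ : size P = size Q by have := congr1 size me; rewrite eP eQ !size_map.
have inP i : i \in P -> i < n by move/mem_mask; rewrite mem_iota.
have inQ i : i \in Q -> i < n by move/mem_mask; rewrite mem_iota.
have sorted_mask_iota m : sorted ltn (mask m (iota 0 n)).
  by apply: sorted_mask; [exact: ltn_trans | exact: iota_ltn_sorted].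
have [sP sQ] := (sorted_mask_iota m1, sorted_mask_iota m2).
have -> : size (mask m1 w) = size (zip P Q) by rewrite size_zip eP size_map sPQ minnn.
apply: H; apply/and4P; split; rewrite ?unzip1_zip ?unzip2_zip ?sPQ //.
- apply/(all_nthP (0, 0)) => i; rewrite size_zip sPQ minnn => lt_iQ.
  rewrite nth_zip //= inP ?inQ ?mem_nth ?sPQ //=.
  by have := congr1 (nth x0 ^~ i) me; rewrite eP eQ !(nth_map 0) ?sPQ // => ->.
- apply/allP => v vPQ; apply/negP => vQ.
  have vP : v.1 \in P by rewrite -(unzip1_zip (eq_leq sPQ)); exact: map_f.
  have := dis (Ordinal (inP _ vP)).
  by rewrite !(tnth_nth false) /= (nth_mask_iota vP) (nth_mask_iota vQ).
Qed.

Lemma twin_matching_filter (w : seq X) T (p : pred (nat * nat)) :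
  twin_matching w T -> twin_matching w (seq.filter p T).
Proof.
case/and4P=> s1 s2 aT dT; apply/and4P; split.
- by apply: (subseq_sorted ltn_trans _ s1); apply/map_subseq/filter_subseq.
- by apply: (subseq_sorted ltn_trans _ s2); apply/map_subseq/filter_subseq.
- by rewrite all_filter; apply: sub_all aT => u hu; apply/implyP.
- apply/allP => u; rewrite mem_filter => /andP[_ uT]; apply: contra (allP dT u uT).
  exact/mem_subseq/map_subseq/filter_subseq.
Qed.

Lemma LTw_le_size (w : seq X) : LTw w <= size w.
Proof. by apply/bigmax_leqP => m _; apply/size_subseq/mask_subseq. Qed.

Lemma subseq_size_le_LCS (s u v : seq X) : subseq s u -> subseq s v -> size s <= LCS u v.
Proof.
case/subseqP => m size_m -> mv; have size_m' : size m == size u by rewrite size_m.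
exact: (leq_bigmax_cond (F := fun m : (size u).-tuple bool => size (mask m u))
  (Tuple size_m') mv).
Qed.

Lemma LCS_le_size (u v : seq X) : LCS u v <= size u.
Proof. by apply/bigmax_leqP => m _; apply/size_subseq/mask_subseq. Qed.

End TwinMatchings.

Lemma LTw_uniq (X : eqType) (w : seq X) : uniq w -> LTw w = 0.
Proof.
case: w => [_|x0 w' uw]; apply/eqP; rewrite -leqn0; first exact: LTw_le_size.
apply: (LTw_le_matchings (x0 := x0)) => -[|u T] //.
case/and4P=> _ _ /andP[/and3P[lt1 lt2 eq_w] _] /andP[+ _].
by move: eq_w; rewrite (nth_uniq x0 lt1 lt2 uw) => /eqP ->; rewrite /= mem_head.
Qed.

Lemma LTw_take_le (X : eqType) (w : seq X) n : LTw (take n w) <= LTw w.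
Proof.
case: w => [|x0 w]; first by case: n.
move: (x0 :: w) => {}w.
apply: (LTw_le_matchings (x0 := x0)) => T /and4P[s1 s2 aT dT].
apply: (matching_size_le_LTw (x0 := x0)); apply/and4P; split => //.
apply: sub_all aT => u; rewrite size_take_min !leq_min.
case/and3P=> /andP[lt1n lt1] /andP[lt2n lt2]; rewrite !nth_take // => ->.
by rewrite lt1 lt2.
Qed.

Lemma ltn_div_of_eq_mod k a b : a < b -> a %% k = b %% k -> a %/ k < b %/ k.
Proof.
move=> lt_ab eq_mod; rewrite ltnNge; apply/negP => le_div.
have : b %/ k * k <= a %/ k * k by rewrite leq_mul2r le_div orbT.
move: lt_ab (divn_eq a k) (divn_eq b k); rewrite eq_mod.
generalize (a %/ k * k) (b %/ k * k) (b %% k); lia.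
Qed.

Lemma ltn_mod_of_eq_div k a b : a < b -> a %/ k = b %/ k -> a %% k < b %% k.
Proof.
move=> lt_ab eq_div; move: lt_ab (divn_eq a k) (divn_eq b k); rewrite eq_div.
generalize (a %% k) (b %% k) (b %/ k * k); lia.
Qed.

Lemma sorted_ltn_map_mod k a (s : seq nat) :
  all (fun i => i %/ k == a) s -> sorted ltn s -> sorted ltn [seq i %% k | i <- s].
Proof.
apply: homo_sorted_in => i j /eqP ia /eqP ja lt_ij.
by apply: ltn_mod_of_eq_div; rewrite // ia ja.
Qed.

Lemma sorted_ltn_map_div k r (s : seq nat) :
  all (fun i => i %% k == r) s -> sorted ltn s -> sorted ltn [seq i %/ k | i <- s].
Proof.
apply: homo_sorted_in => i j /eqP ir /eqP jr lt_ij.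
by apply: ltn_div_of_eq_mod; rewrite // ir jr.
Qed.

Lemma sorted_pairs_const_div_sum k j (u0 : nat * nat) (U : seq (nat * nat)) :
  sorted ltn (unzip1 (u0 :: U)) -> sorted ltn (unzip2 (u0 :: U)) ->
  all (fun u => u.1 %/ k + u.2 %/ k == j) (u0 :: U) ->
  {in u0 :: U, forall v, v.1 %/ k = u0.1 %/ k /\ v.2 %/ k = u0.2 %/ k}.
Proof.
move=> /= /(order_path_min ltn_trans)/allP lt1 /(order_path_min ltn_trans)/allP lt2.
move=> /andP[/eqP sum0 /allP sum_j] v; rewrite inE => /orP[/eqP -> //|vU].
have := leq_div2r k (ltnW (lt1 _ (map_f fst vU))).
have := leq_div2r k (ltnW (lt2 _ (map_f snd vU))).
by move: (eqP (sum_j v vU)) sum0 => /=; lia.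
Qed.

Lemma count_le_sum_fibres (T : Type) (s : seq T) (P : pred T) (f : T -> nat) n :
  all (fun u => f u < n) s ->
  count P s <= \sum_(j < n) count (fun u => P u && (f u == j)) s.
Proof.
elim: s => [|u s IH] /=; first by rewrite big1.
case/andP=> fu_lt fs_lt; rewrite big_split /= leq_add ?IH //.
by case: (P u) => //; rewrite (bigD1 (Ordinal fu_lt)) //= eqxx leq_addr.
Qed.

Lemma size_perm_word k (p : 'S_k) : size (perm_word p) = k.
Proof. by rewrite size_map size_enum_ord. Qed.

Lemma perm_word_uniq k (p : 'S_k) : uniq (perm_word p).
Proof. by rewrite map_inj_uniq ?enum_uniq //; exact: perm_inj. Qed.

Section BlockWord.
Variables (k t : nat) (sg : 'I_t -> 'S_k) (a0 : 'I_t) (y0 : 'I_k).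
Hypothesis k_gt0 : 0 < k.

Definition block_word (x : seq 'I_t) : seq 'I_k :=
  flatten [seq perm_word (sg a) | a <- x].

Lemma size_block_word x : size (block_word x) = k * size x.
Proof.
elim: x => [|a x IH]; first by rewrite muln0.
by rewrite /block_word /= size_cat -/(block_word x) IH size_perm_word mulnS.
Qed.

Lemma nth_block_word x i : i < k * size x ->
  nth y0 (block_word x) i = nth y0 (perm_word (sg (nth a0 x (i %/ k)))) (i %% k).
Proof.
elim: x i => [|a x IH] i; first by rewrite muln0.
rewrite /= mulnS => lt_i.
rewrite /block_word /= nth_cat size_perm_word -/(block_word x).
case: (ltnP i k) => [lt_ik|le_ki]; first by rewrite divn_small ?modn_small.
rewrite -{2 3}(subnKC le_ki) divnDl // divnn k_gt0 modnDl IH //.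
by rewrite -(ltn_add2l k) subnKC.
Qed.

Variable L : nat.
Hypothesis LCS_sg : forall a b, a != b -> LCS (perm_word (sg a)) (perm_word (sg b)) <= L.

Section Matching.
Variables (x : seq 'I_t) (T : seq (nat * nat)).
Hypothesis T_twins : twin_matching y0 (block_word x) T.

Local Notation letter i := (nth a0 x (i %/ k)).

Lemma matched_pair u : u \in T ->
  [/\ u.1 < k * size x, u.2 < k * size x &
      nth y0 (block_word x) u.1 = nth y0 (block_word x) u.2].
Proof.
case/and4P: T_twins => _ _ /allP aT _ /aT /and3P[].
by rewrite size_block_word => lt1 lt2 /eqP.
Qed.

Lemma div_lt_size i : i < k * size x -> i %/ k < size x.
Proof. by rewrite ltn_divLR // mulnC. Qed.

Lemma same_letter_same_offset u : u \in T -> letter u.1 = letter u.2 ->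
  u.1 %% k = u.2 %% k.
Proof.
case/matched_pair=> lt1 lt2; rewrite !nth_block_word // => + eq_letter.
rewrite eq_letter => /eqP; rewrite nth_uniq ?size_perm_word ?ltn_mod ?perm_word_uniq //.
exact/eqP.
Qed.

Lemma count_same_letter_le r :
  count (fun u => (letter u.1 == letter u.2) && (u.1 %% k == r)) T <= LTw x.
Proof.
rewrite -size_filter; set Tr := seq.filter _ T.
have /and4P[s1 s2 _ _] : twin_matching y0 (block_word x) Tr.
  exact: twin_matching_filter.
have memTr u : u \in Tr ->
    [/\ u \in T, letter u.1 = letter u.2, u.1 %% k = r & u.2 %% k = r].
  rewrite mem_filter => /andP[/andP[/eqP eq_letter /eqP u1r] uT].
  by rewrite -(same_letter_same_offset uT eq_letter).
have mod_r (p : nat * nat -> nat) : (forall u, u \in Tr -> p u %% k = r) ->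
    all (fun i => i %% k == r) (map p Tr).
  by move=> pr; apply/allP => _ /mapP[u uTr ->]; rewrite pr.
rewrite -(size_map (fun u => (u.1 %/ k, u.2 %/ k)) Tr).
apply: (matching_size_le_LTw (x0 := a0)); apply/and4P; split.
- rewrite /unzip1 -map_comp (map_comp (divn^~ k) fst).
  by apply: sorted_ltn_map_div s1; apply: mod_r => u /memTr[].
- rewrite /unzip2 -map_comp (map_comp (divn^~ k) snd).
  by apply: sorted_ltn_map_div s2; apply: mod_r => u /memTr[].
- apply/allP => _ /mapP[u uTr ->] /=; have [uT eq_letter _ _] := memTr u uTr.
  have [lt1 lt2 _] := matched_pair uT.
  by rewrite !div_lt_size //=; apply/eqP.
- apply/allP => _ /mapP[u uTr ->] /=.
  apply/negP => /mapP[_ /mapP[u' u'Tr ->] /= eq_div].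
  have [uT _ u1r _] := memTr u uTr; have [_ _ _ u'2r] := memTr u' u'Tr.
  have eq12 : u.1 = u'.2 by rewrite (divn_eq u.1 k) (divn_eq u'.2 k) eq_div u1r u'2r.
  case/and4P: T_twins => _ _ _ /allP/(_ u uT); rewrite eq12.
  by move/negP; apply; apply: map_f; move: u'Tr; rewrite mem_filter => /andP[].
Qed.

Lemma count_cross_letters_le j :
  count (fun u => (letter u.1 != letter u.2) && (u.1 %/ k + u.2 %/ k == j)) T <= L.
Proof.
rewrite -size_filter; set U := seq.filter _ T.
have /and4P[s1 s2 _ _] : twin_matching y0 (block_word x) U.
  exact: twin_matching_filter.
have memU u : u \in U ->
    [/\ u \in T, letter u.1 != letter u.2 & u.1 %/ k + u.2 %/ k = j].
  by rewrite mem_filter => /andP[/andP[ne /eqP sum_j] uT]; split.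
case eU: U => [//|u0 U'].
have blocks : {in U, forall v, v.1 %/ k = u0.1 %/ k /\ v.2 %/ k = u0.2 %/ k}.
  move: s1 s2; rewrite eU => s1 s2; apply: sorted_pairs_const_div_sum s1 s2 _.
  by apply/allP => u; rewrite -eU => /memU[_ _ ->].
have u0U : u0 \in U by rewrite eU mem_head.
have [_ ne _] := memU u0 u0U.
rewrite -{}eU.
apply: leq_trans (LCS_sg ne).
set A := perm_word _; set B := perm_word _.
have common : map (nth y0 A) [seq i %% k | i <- unzip1 U] =
              map (nth y0 B) [seq i %% k | i <- unzip2 U].
  rewrite -!map_comp; apply/eq_in_map => v vU /=.
  have [vT _ _] := memU v vU; have [lt1 lt2 eq_v] := matched_pair vT.
  by rewrite /A /B -(blocks v vU).1 -(blocks v vU).2 -!nth_block_word.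
have -> : size U = size (map (nth y0 A) [seq i %% k | i <- unzip1 U]).
  by rewrite !size_map.
apply: subseq_size_le_LCS; last rewrite common; apply: subseq_map_nth.
- apply: sorted_ltn_map_mod s1.
  by apply/allP => _ /mapP[v vU ->]; rewrite (blocks v vU).1.
- by apply/allP => _ /mapP[i _ ->]; rewrite size_perm_word ltn_mod.
- apply: sorted_ltn_map_mod s2.
  by apply/allP => _ /mapP[v vU ->]; rewrite (blocks v vU).2.
- by apply/allP => _ /mapP[i _ ->]; rewrite size_perm_word ltn_mod.
Qed.

End Matching.

Lemma LTw_block_word x : LTw (block_word x) <= 2 * size x * L + k * LTw x.
Proof.
apply: (LTw_le_matchings (x0 := y0)) => T T_twins.
have div_lt u : u \in T -> u.1 %/ k < size x /\ u.2 %/ k < size x.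
  by case/(matched_pair T_twins) => lt1 lt2 _; rewrite !div_lt_size.
rewrite -(count_predC (fun u => nth a0 x (u.1 %/ k) == nth a0 x (u.2 %/ k)) T) addnC.
apply: leq_add.
- apply: leq_trans (count_le_sum_fibres _
    (f := fun u => u.1 %/ k + u.2 %/ k) (n := 2 * size x) _) _.
    by apply/allP => u /div_lt[]; lia.
  rewrite -[X in X * L](card_ord (2 * size x)) -sum_nat_const.
  by apply: leq_sum => j _; apply: count_cross_letters_le.
- apply: leq_trans (count_le_sum_fibres _ (f := fun u => u.1 %% k) (n := k) _) _.
    by apply/allP => u _; rewrite ltn_mod.
  rewrite -[k in k * _](card_ord k) -sum_nat_const.
  by apply: leq_sum => r _; apply: count_same_letter_le.
Qed.

End BlockWord.

Lemma bigminn_le_seq (I : eqType) (r : seq I) (F : I -> nat) x0 i :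
  i \in r -> \big[minn/x0]_(j <- r) F j <= F i.
Proof.
elim: r => [|j r IH] //; rewrite big_cons inE => /orP[/eqP ->|ir].
  exact: geq_minl.
exact: leq_trans (geq_minr _ _) (IH ir).
Qed.

Lemma LCS_le_maxLCS k (S : {set 'S_k}) p q : p \in S -> q \in S -> p != q ->
  LCS (perm_word p) (perm_word q) <= maxLCS S.
Proof.
move=> pS qS pq.
apply: leq_trans (leq_bigmax_cond (P := fun p => p \in S)
  (F := fun p => \max_(q in S | p != q) LCS (perm_word p) (perm_word q)) p pS).
by apply: (leq_bigmax_cond (F := fun q => LCS (perm_word p) (perm_word q))); rewrite qS.
Qed.

Lemma maxLCS_le k (S : {set 'S_k}) : maxLCS S <= k.
Proof.
apply/bigmax_leqP => p _; apply/bigmax_leqP => q _.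
by apply: leq_trans (LCS_le_size _ _) _; rewrite size_perm_word.
Qed.

Lemma LCS2_attained k t : t <= k`! ->
  exists2 S : {set 'S_k}, #|S| = t & maxLCS S <= LCS2 t k.
Proof.
move=> le_t; apply: (big_ind (fun v => exists2 S : {set 'S_k}, #|S| = t & maxLCS S <= v)).
  3: by move=> S /eqP; exists S.
- exists [set p in take t (enum 'S_k)]; last exact: maxLCS_le.
  rewrite cardsE (card_uniqP (take_uniq _ (enum_uniq _))).
  by rewrite size_takel // -cardE card_Sn.
- move=> a b [S1 S1t le1] [S2 S2t le2]; case: (leqP a b) => ab.
    by exists S1.
  by exists S2.
Qed.

Lemma LCS2_gt0 k t : 0 < k -> 1 < t -> 0 < LCS2 t k.
Proof.
move=> k_gt0 t_gt1; apply: (big_ind (fun v => 0 < v)) => [||S /eqP St] //.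
  by move=> a b a_gt0 b_gt0; rewrite leq_min a_gt0.
move: t_gt1; rewrite -St => /card_gt1P[p [q [pS qS pq]]].
apply: leq_trans (LCS_le_maxLCS pS qS pq); pose y := Ordinal k_gt0.
apply: (subseq_size_le_LCS (s := [:: p y])); rewrite sub1seq.
  by apply: map_f; rewrite mem_enum.
by rewrite -(permKV q (p y)); apply: map_f; rewrite mem_enum.
Qed.

Lemma double_le_fact k : 3 <= k -> 2 * k <= k`!.
Proof.
case: k => [|[|[|k]]] // _; rewrite factS [2 * _]mulnC leq_mul2l /= factS.
by apply: leq_trans (_ : 2 <= k.+2) _ => //; rewrite leq_pmulr // fact_gt0.
Qed.

Lemma LT_le_LTw k n (w : n.-tuple 'I_k) : LT k n <= LTw w.
Proof. exact/bigminn_le_seq/mem_index_enum. Qed.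

Lemma LT_attained t m (a0 : 'I_t) : exists x : m.-tuple 'I_t, LTw x <= LT t m.
Proof.
apply: (big_ind (fun v => exists x : m.-tuple 'I_t, LTw x <= v)).
  3: by move=> x _; exists x.
- exists (nseq_tuple m a0).
  by rewrite -[m in _ <= m](size_tuple (nseq_tuple m a0)) LTw_le_size.
- move=> a b [x1 le1] [x2 le2]; case: (leqP a b) => ab.
    by exists x1.
  by exists x2.
Qed.

Lemma LT_le k n : LT k n <= n.
Proof.
apply: (big_ind (fun v => v <= n)) => // [a b le_a _|w _].
  by rewrite geq_min le_a.
by rewrite -[n in _ <= n](size_tuple w) LTw_le_size.
Qed.

Lemma LT_eq0 k n : n <= k -> LT k n = 0.
Proof.
case: n => [_|n lt_nk]; apply/eqP; rewrite -leqn0; first exact: LT_le.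
have size_w : size (take n.+1 (perm_word (1 : 'S_k))) == n.+1.
  by rewrite size_takel // size_perm_word.
apply: leq_trans (LT_le_LTw (Tuple size_w)) _.
by rewrite /= LTw_uniq // take_uniq // perm_word_uniq.
Qed.

Lemma LT_recursion k n : 3 <= k ->
  LT k n <= 2 * (n %/ k).+1 * LCS2 (2 * k) k + k * LT (2 * k) (n %/ k).+1.
Proof.
move=> le3k; have k_gt0 : 0 < k by apply: leq_trans le3k.
have [S S_card S_LCS] := LCS2_attained (double_le_fact le3k).
have size_S : size (enum S) = 2 * k by rewrite -cardE S_card.
pose a0 : 'I_(2 * k) := Ordinal (leq_trans k_gt0 (leq_pmull k (isT : 0 < 2))).
pose y0 : 'I_k := Ordinal k_gt0.
pose sg (a : 'I_(2 * k)) := nth 1%g (enum S) a.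
have LCS_sg a b : a != b -> LCS (perm_word (sg a)) (perm_word (sg b)) <= LCS2 (2 * k) k.
  move=> ab; apply: leq_trans S_LCS; apply: LCS_le_maxLCS.
  - by rewrite -mem_enum mem_nth ?size_S.
  - by rewrite -mem_enum mem_nth ?size_S.
  by rewrite nth_uniq ?size_S ?enum_uniq.
have [x LTw_x] := LT_attained (n %/ k).+1 a0.
have size_w : size (take n (block_word sg x)) == n.
  rewrite size_takel // size_block_word size_tuple mulnS {1}(divn_eq n k) mulnC.
  by rewrite addnC leq_add2r ltnW // ltn_mod.
apply: leq_trans (LT_le_LTw (Tuple size_w)) _.
apply: leq_trans (LTw_take_le _ _) _.
apply: leq_trans (LTw_block_word a0 y0 k_gt0 LCS_sg x) _.
by rewrite size_tuple leq_add2l leq_mul2l LTw_x orbT.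
Qed.

Lemma divn_succ_mul_le n K : (n %/ K).+1 * K <= n + K.
Proof. by rewrite mulSn addnC leq_add2r leq_divM. Qed.

Local Open Scope ring_scope.

Lemma powR_exp3 (R : realType) (x r : R) : 0 <= x -> (x `^ r) ^+ 3 = x `^ (r * 3%:R).
Proof. by move=> x_ge0; rewrite -powR_mulrn ?powR_ge0 // -powRrM. Qed.

Lemma powR_third (R : realType) (x : R) : 0 <= x ->
  x `^ (3^-1) = x * x `^ (- (2 / 3)).
Proof.
move=> x_ge0; rewrite -[in LHS](_ : 1 + - (2 / 3) = 3^-1 :> R); last by field.
by rewrite powRD ?powRr1 //; apply/implyP => /eqP; lra.
Qed.

Lemma le_of_exp3_le (R : realFieldType) (x y : R) : 0 <= x -> 0 <= y ->
  x ^+ 3 <= y ^+ 3 -> x <= y.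
Proof. by move=> x_ge0 y_ge0; rewrite ler_pXn2r. Qed.

Lemma two_powR_bounds (R : realType) : 1/2 <= (2 `^ (- (2 / 3)) : R) <= 63/100.
Proof.
have b_ge0 := powR_ge0 (2 : R) (- (2 / 3)).
have b3 : (2 `^ (- (2 / 3)) : R) ^+ 3 = 4^-1.
  rewrite powR_exp3 // (_ : - (2 / 3) * 3%:R = - 2%:R); last by field.
  by rewrite powR_invn // expr2 -natrM.
by apply/andP; split; apply: le_of_exp3_le; rewrite ?b3 //; lra.
Qed.

Lemma three_powR_third_le (R : realType) : (3 `^ (3^-1) : R) <= 3/2.
Proof.
apply: le_of_exp3_le; rewrite ?powR_ge0 ?powR_exp3 ?mulVf ?powRr1 //; lra.
Qed.

Lemma affine_le_eventually (R : realType) (f : nat -> R) (a d eps : R) :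
  0 < eps -> (forall n, f n <= a * n%:R + d) ->
  exists N, forall n, (N <= n)%N -> f n <= a * n%:R + eps * n%:R.
Proof.
move=> eps_gt0 f_le; have d_eps_ge0 := divr_ge0 (normr_ge0 d) (ltW eps_gt0).
exists (Num.Def.archi_bound (`|d| / eps)) => n le_Nn.
have : `|d| / eps < n%:R.
  by apply: lt_le_trans (archi_boundP d_eps_ge0) _; rewrite ler_nat.
rewrite ltr_pdivrMr // => lt_d; have := ler_norm d; have := f_le n; lra.
Qed.

Section LinearBound.
Variables (R : realType) (C : R).
Hypothesis LCS2_bound : forall k : nat, (1 <= k)%N -> (2 * k <= k`!)%N ->
  (LCS2 (2 * k) k)%:R <= C * (k%:R `^ (3^-1)).

Definition density (K : nat) : R := C * K%:R `^ (- (2 / 3)).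

Lemma C_cbrt3_ge1 : 1 <= C * 3 `^ (3^-1).
Proof.
apply: le_trans _ (@LCS2_bound 3%N isT (double_le_fact (leqnn 3))).
by rewrite ler1n LCS2_gt0.
Qed.

Lemma C_ge0 : 0 <= C.
Proof.
have := C_cbrt3_ge1; have := powR_gt0 (3^-1) (ltr0n R 3); set a := 3 `^ _.
move=> a_gt0 Ca_ge1; rewrite leNgt; apply/negP => C_lt0.
have : C * a < 0 by rewrite pmulr_llt0.
lra.
Qed.

Lemma density_ge0 K : 0 <= density K.
Proof. by rewrite mulr_ge0 ?C_ge0 ?powR_ge0. Qed.

Lemma density_double K : density (2 * K) <= 63/100 * density K.
Proof.
rewrite /density natrM powRM ?ler0n //.
have [_ b_le] := andP (two_powR_bounds R).
have := ler_wpM2r (mulr_ge0 C_ge0 (powR_ge0 K%:R (- (2 / 3)))) b_le; lra.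
Qed.

Lemma LCS2_le_density K : (3 <= K)%N -> (LCS2 (2 * K) K)%:R <= K%:R * density K.
Proof.
move=> le3K; have le1K : (1 <= K)%N by apply: leq_trans le3K.
apply: le_trans (@LCS2_bound K le1K (double_le_fact le3K)) _.
by rewrite powR_third ?ler0n // /density mulrCA.
Qed.

Lemma LT_next_level K n (c d : R) : (3 <= K)%N -> 0 <= c ->
  (LT (2 * K) (n %/ K).+1)%:R <= c * density (2 * K) * (n %/ K).+1%:R + d ->
  (LT K n)%:R <= (2 + 63/100 * c) * density K * ((n %/ K).+1 * K)%:R + K%:R * d.
Proof.
move=> le3K c_ge0 next; have := LT_recursion n le3K.
rewrite -(ler_nat R) natrD !natrM; set m := (n %/ K).+1 in next *.
have dens2 : c * density (2 * K) * m%:R <= c * (63/100 * density K) * m%:R.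
  by rewrite ler_wpM2r // ler_wpM2l // density_double.
have := ler_wpM2l (mulr_ge0 (ler0n R 2) (ler0n R m)) (LCS2_le_density le3K).
have := ler_wpM2l (ler0n R K) (le_trans next (lerD dens2 (lexx d))).
lra.
Qed.

Lemma LT_linear_large K n : (50 <= K)%N -> (LT K n)%:R <= 59/10 * density K * n%:R.
Proof.
elim/ltn_ind: n K => n IH K le50K.
have le3K : (3 <= K)%N by apply: leq_trans le50K.
have un_ge0 := mulr_ge0 (density_ge0 K) (ler0n R n).
have [le_nK|lt_Kn] := leqP n K; first by rewrite LT_eq0 // mulr0n; lra.
have mK := divn_succ_mul_le n K; set m := (n %/ K).+1 in mK *.
have [le_m2K|lt_2Km] := leqP m (2 * K).
  have next : (LT (2 * K) m)%:R <= 0 * density (2 * K) * m%:R + 0.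
    by rewrite LT_eq0 // !mul0r addr0.
  have := LT_next_level le3K (lexx 0) next; rewrite -/m => rec.
  have : (m * K)%:R <= 2 * n%:R :> R.
    by rewrite -natrM ler_nat (leq_trans mK) // mul2n -addnn leq_add2l ltnW.
  by move/(ler_wpM2l (density_ge0 K)); lra.
have le100K : (100 * K <= n)%N.
  by apply: leq_trans _ (leq_divM n K); rewrite leq_mul2r; apply/orP; right; lia.
have lt_mn : (m < n)%N by nia.
have c_ge0 : 0 <= 59/10 :> R by lra.
have := IH m lt_mn (2 * K)%N (leq_trans le50K (leq_pmull K (isT : (0 < 2)%N))).
rewrite -[X in _ <= X]addr0 => /(LT_next_level le3K c_ge0); rewrite -/m => rec.
have : (m * K)%:R <= 101/100 * n%:R :> R.
  have : (100 * (m * K) <= 101 * n)%N by lia.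
  by rewrite -(ler_nat R) !natrM; lra.
by move/(ler_wpM2l (density_ge0 K)); lra.
Qed.

Lemma LT_linear_from_level K d : (3 <= K)%N ->
  (forall m, (LT (2 * K) m)%:R <= 59/10 * density (2 * K) * m%:R + d) ->
  forall n, (LT K n)%:R <= 59/10 * density K * n%:R + (6 * density K * K%:R + K%:R * d).
Proof.
move=> le3K next n; have c_ge0 : 0 <= 59/10 :> R by lra.
have rec := LT_next_level le3K c_ge0 (next (n %/ K).+1).
have : ((n %/ K).+1 * K)%:R <= n%:R + K%:R :> R.
  by rewrite -natrD ler_nat divn_succ_mul_le.
move/(ler_wpM2l (density_ge0 K)); have := mulr_ge0 (density_ge0 K) (ler0n R n).
have := mulr_ge0 (density_ge0 K) (ler0n R K); lra.
Qed.

Lemma LT_affine_ge3 K : (3 <= K)%N ->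
  exists d, forall n, (LT K n)%:R <= 59/10 * density K * n%:R + d.
Proof.
move: {2}(50 - K)%N (leqnn (50 - K)) => j; elim: j K => [|j IH] K le_j le3K.
  by exists 0 => n; rewrite addr0 LT_linear_large // -subn_eq0 -leqn0.
have [le50K|lt_K50] := leqP 50 K.
  by exists 0 => n; rewrite addr0 LT_linear_large.
have le3K2 : (3 <= 2 * K)%N by apply: leq_trans le3K (leq_pmull K _).
have [|d next] := IH (2 * K)%N _ le3K2; first by lia.
by exists (6 * density K * K%:R + K%:R * d); apply: LT_linear_from_level.
Qed.

Lemma LT_affine_bound k : (2 <= k)%N ->
  exists d, forall n, (LT k n)%:R <= 6 * C * (k%:R `^ (- (2 / 3))) * n%:R + d.
Proof.
case: k => [|[|[|k]]] // _; last first.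
  have [d bound] := @LT_affine_ge3 k.+3 isT; exists d => n.
  have := mulr_ge0 (density_ge0 k.+3) (ler0n R n); have := bound n.
  by rewrite /density; lra.
exists 0 => n; rewrite addr0.
have LT_le_n : (LT 2 n)%:R <= n%:R :> R by rewrite ler_nat LT_le.
have [b_ge _] := andP (two_powR_bounds R).
have := ler_wpM2l C_ge0 b_ge; have := ler_wpM2l C_ge0 (three_powR_third_le R).
have := C_cbrt3_ge1 => Ca_ge1 Ca_le Cb_ge.
have : 1 <= 6 * C * 2 `^ (- (2 / 3)) by lra.
by move/(ler_wpM2r (ler0n R n)); rewrite mul1r; apply: le_trans.
Qed.

End LinearBound.

Unset Implicit Arguments.
Theorem theorem8 (R : realType) (C : R) :
  (forall k : nat, (1 <= k)%N -> (2 * k <= k`!)%N ->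
     (LCS2 (2 * k) k)%:R <= C * (k%:R `^ (3^-1))) ->
  forall k : nat, (2 <= k)%N ->
  forall eps : R, 0 < eps ->
  exists N : nat, forall n : nat, (N <= n)%N ->
    (LT k n)%:R <= 6 * C * (k%:R `^ (- (2 / 3))) * n%:R + eps * n%:R.
Proof.
move=> LCS2_bound k le2k eps eps_gt0.
have [d LT_affine] := LT_affine_bound LCS2_bound le2k.
exact: affine_le_eventually eps_gt0 LT_affine.
Qed.
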